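(* Let $F$ be any field, $N\in\mathbb{N}$, and $p,p'\in\mathbb{N}$ with $p+p'\le N+1$. If $x\in F^{N+1}$ satisfies $\operatorname{rank}(H_{p,p'-1}(x))>p$, then $\operatorname{rank}(H_{p-1,p'}(x))=p$.
   Context: $\mathbb{N}=\{0,1,2,\ldots\}$. For $N\in\mathbb{N}$, $x=(x_0,\ldots,x_N)\in F^{N+1}$ and integers $s,t\ge -1$ with $s+t\le N$, the Hankel matrix $H_{s,t}(x)$ is the $(s+1)\times(t+1)$ matrix $(x_{i+j})_{0\le i\le s,\,0\le j\le t}$ (a matrix with zero rows or columns has rank $0$). *)

From mathcomp Require Import all_boot all_order all_algebra.
Set Implicit Arguments. Unset Strict Implicit. Unset Printing Implicit Defensive.
Import GRing.Theory.
Local Open Scope ring_scope.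

(* In the paper's notation, H_{s,t}(x) = hankel (s+1) (t+1) x  (s,t >= -1).
   Entries with i+j > N never occur under the hypotheses s+t <= N. *)
Definition hankel (F : fieldType) (N r c : nat) (x : 'rV[F]_(N.+1)) : 'M[F]_(r, c) :=
  \matrix_(i < r, j < c) x 0 (inord (i + j)).

From mathcomp Require Import all_boot all_order all_algebra.
Set Implicit Arguments. Unset Strict Implicit. Unset Printing Implicit Defensive.
Import GRing.Theory.
Local Open Scope ring_scope.

(* The two Hankel matrices A = H_{p,p'-1}(x) (size (p+1) x p')
   and B = H_{p-1,p'}(x) (size p x (p'+1)) share the block H_{p-1,p'-1}(x):
   it is A with its last row removed and B with its last column removed.
   Deleting one row lowers the rank by at most one, and deleting columns
   never raises it, so
       p < rank A <= rank H_{p-1,p'-1}(x) + 1 <= rank B + 1,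
   i.e. rank B >= p; since B has only p rows, rank B = p.
   The file first proves the two general rank facts about submatrices, then
   the two identifications of the common Hankel block, and finally lemma10. *)

Section SubmatrixRank.
Variable F : fieldType.

Lemma mxrank_colsub m n n' (g : 'I_n' -> 'I_n) (A : 'M[F]_(m, n)) :
  (\rank (colsub g A) <= \rank A)%N.
Proof.
rewrite -mxrank_tr -[leqRHS]mxrank_tr trmx_mxsub.
exact/mxrankS/rowsub_sub.
Qed.

(* Removing the last row of a matrix lowers its rank by at most one: every
   row of A lies in the span of the remaining rows plus the last one. *)
Lemma mxrank_drop_last_row m n (A : 'M[F]_(m.+1, n)) :
  (\rank A <= \rank (rowsub (widen_ord (leqnSn m)) A) + 1)%N.
Proof.
set T := rowsub (widen_ord (leqnSn m)) A.
have A_sub : (A <= T + row ord_max A)%MS.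
  apply/row_subP => i; have [->|ne_i] := eqVneq i ord_max; first exact: addsmxSr.
  have i_lt : (i < m)%N.
    by rewrite ltn_neqAle -ltnS ltn_ord andbT; apply: contra ne_i => /eqP i_max; apply/eqP/val_inj.
  have -> : i = widen_ord (leqnSn m) (Ordinal i_lt) by apply: val_inj.
  by rewrite -row_rowsub; apply: submx_trans (row_sub _ _) (addsmxSl _ _).
apply: leq_trans (mxrankS A_sub) _.
apply: leq_trans (mxrank_adds_leqif T (row ord_max A)).1 _.
by rewrite leq_add2l rank_leq_row.
Qed.

End SubmatrixRank.

Lemma hankel_drop_last_row (F : fieldType) (N r c : nat) (x : 'rV[F]_(N.+1)) :
  rowsub (widen_ord (leqnSn r)) (hankel r.+1 c x) = hankel r c x.
Proof. by apply/matrixP => i j; rewrite !mxE. Qed.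

Lemma hankel_drop_last_col (F : fieldType) (N r c : nat) (x : 'rV[F]_(N.+1)) :
  colsub (widen_ord (leqnSn c)) (hankel r c.+1 x) = hankel r c x.
Proof. by apply/matrixP => i j; rewrite !mxE. Qed.

Theorem lemma10 (F : fieldType) (N p p' : nat) (x : 'rV[F]_(N.+1)) :
  (p + p' <= N.+1)%N ->
  (p < \rank (hankel p.+1 p' x))%N ->
  \rank (hankel p p'.+1 x) = p.
Proof.
move=> _ rankA_gt.
have rankA_le : (\rank (hankel p.+1 p' x) <= \rank (hankel p p' x) + 1)%N.
  by rewrite -[in leqRHS]hankel_drop_last_row mxrank_drop_last_row.
have rank_block_le : (\rank (hankel p p' x) <= \rank (hankel p p'.+1 x))%N.
  by rewrite -[in leqLHS]hankel_drop_last_col mxrank_colsub.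
apply/eqP; rewrite eqn_leq rank_leq_row /=.
rewrite -(leq_add2r 1) addn1 (leq_trans rankA_gt) // (leq_trans rankA_le) //.
by rewrite leq_add2r.
Qed.
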